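(* Assume the TFM must confirm every transaction included in the block. Then no (possibly randomized) TFM $(\mathbf x,\mathbf p,\mu)$ with non-trivial miner revenue satisfies weak UIC, weak MIC and $1$-weak-SCP simultaneously, whether the block size is finite or infinite. Moreover, if the block size is finite, the only (possibly randomized) such TFM satisfying weak UIC, weak MIC and $1$-weak-SCP is the trivial mechanism that never confirms any transaction and always pays the miner nothing.
   Context: Setting (TFM). Each user $i$ has a true value $v_i\ge0$ and submits a single bid $b_i\ge0$. A block holds at most $B$ transactions ($B$ finite or infinite). A TFM consists of an inclusion rule (run by the miner, choosing at most $B$ bids to include, possibly using the miner's random coins) and payment and miner-revenue rules (run by the blockchain on the included bids, possibly using fresh trusted blockchain randomness revealed only after the miner commits to the inclusion). Here every included bid is confirmed. Confirmed bids pay at most their bid, unconfirmed bids pay $0$, the miner receives at most the total payment, and the rest is burnt. The mechanism treats users symmetrically. Composing the honest inclusion rule with the other rules gives $(\mathbf x,\mathbf p,\mu)$: $x_i(\mathbf b)$ the probability user $i$ is confirmed, $p_i(\mathbf b)$ its expected payment, $\mu(\mathbf b)$ the miner's expected revenue. Non-trivial miner revenue: $\mu$ not identically $0$. Strategic players: a user, the miner, or the miner with some users; they may have users bid untruthfully after seeing all bids, inject fake bids (true value $0$), and (if the miner is involved) include any at most $B$ available bids, with arbitrarily chosen (not necessarily random) inclusion choices. Weak ($1$-strict) utility: miner revenue (if the miner is in the player) plus $v-p$ for each confirmed transaction of the player (true value $v$, payment $p$), minus $(b-v)$ for each unconfirmed transaction of the player with bid $b>v$; expected values are used. Weak UIC: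 with an honest miner, each user's expected weak utility is maximized by truthful bidding without fake bids, whatever the other bids. Weak MIC: the miner's expected weak utility is maximized by honestly following the inclusion rule, whatever the bids. $1$-weak-SCP: for every coalition of the miner and one user, expected joint weak utility is maximized by truthful bidding and honest miner behavior, whatever the other bids. *)

From mathcomp Require Import all_boot all_order all_algebra.
From mathcomp Require Import fingroup perm reals.
Set Implicit Arguments. Unset Strict Implicit. Unset Printing Implicit Defensive.
Import Order.TTheory GRing.Theory Num.Theory.
Local Open Scope ring_scope.

(* A bid vector is a [seq R]; users are identified with positions.          *)
(* An inclusion outcome is a mask [m : seq bool] of the same length as the  *)
(* bid vector (m_i = true iff bid i is included, hence confirmed).          *)
(* Block size: [None] = infinite, [Some B] = at most B transactions.        *)

Definition capacity := option nat.
Definition fits (B : capacity) (k : nat) : bool :=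
  if B is Some B' then (k <= B')%N else true.

Section TFM.
Variable R : realType.

Record tfm := TFM {
  (* honest (possibly randomized) inclusion rule: probability of each mask *)
  incl : seq R -> seq bool -> R;
  (* payment rule on the list of included bids: expected payment of the
     j-th included bid (expectation over the blockchain's randomness)       *)
  pay  : seq R -> nat -> R;
  (* miner-revenue rule on the list of included bids (expected value)       *)
  rev  : seq R -> R }.

Definition nonneg_bids (b : seq R) : bool := all (fun x => 0 <= x) b.

Definition perm_seq (T : Type) (x0 : T) (n : nat) (s : {perm 'I_n}) (l : seq T)
  : seq T := [seq nth x0 l (val (s i)) | i <- enum 'I_n].

(* position, inside the included list, of the included bid i *)
Definition sub_idx (m : seq bool) (i : nat) : nat := count id (take i m).

Definition is_tfm (B : capacity) (T : tfm) : Prop :=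
  (forall b, nonneg_bids b ->
     (forall m, 0 <= incl T b m) /\
     (forall m, size m <> size b -> incl T b m = 0) /\
     (forall m, ~~ fits B (count id m) -> incl T b m = 0) /\
     \sum_(m : (size b).-tuple bool) incl T b m = 1) /\
  (* confirmed bids pay (nonnegatively) at most their bid; the miner
     receives (nonnegatively) at most the total payment, the rest is burnt *)
  (forall s, nonneg_bids s ->
     (forall j, (j < size s)%N -> 0 <= pay T s j <= nth 0 s j) /\
     0 <= rev T s <= \sum_(j < size s) pay T s j) /\
  (forall b (s : {perm 'I_(size b)}) m, nonneg_bids b -> size m = size b ->
     incl T (perm_seq 0 s b) (perm_seq false s m) = incl T b m) /\
  (forall l (s : {perm 'I_(size l)}), nonneg_bids l ->
     rev T (perm_seq 0 s l) = rev T l /\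
     forall j : 'I_(size l), pay T (perm_seq 0 s l) j = pay T l (s j)).

Definition xo (T : tfm) (b : seq R) (i : nat) : R :=
  \sum_(m : (size b).-tuple bool) incl T b m * (nth false m i)%:R.
Definition po (T : tfm) (b : seq R) (i : nat) : R :=
  \sum_(m : (size b).-tuple bool)
     incl T b m * (if nth false m i then pay T (mask m b) (sub_idx m i) else 0).
Definition muo (T : tfm) (b : seq R) : R :=
  \sum_(m : (size b).-tuple bool) incl T b m * rev T (mask m b).

(* Weak (1-strict) utility of the users' part of a player, for a realized
   mask m.  [role] is aligned with b: [Some v] = transaction of the player
   with true value v (fake bids have value 0), [None] = not the player's. *)
Definition user_util (T : tfm) (b : seq R) (role : seq (option R))
    (m : seq bool) : R :=
  \sum_(i < size b)
    match nth None role i with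
    | None => 0
    | Some v =>
        if nth false m i then v - pay T (mask m b) (sub_idx m i)
        else if v < nth 0 b i then - (nth 0 b i - v) else 0
    end.

Definition exp_user_util (T : tfm) (b : seq R) (role : seq (option R)) : R :=
  \sum_(m : (size b).-tuple bool) incl T b m * user_util T b role m.

(* roles: the honest user (bid = value v, appended last) and a deviating
   user (real bid beta, then fake bids f of true value 0) *)
Definition role_honest (others : seq R) (v : R) : seq (option R) :=
  nseq (size others) None ++ [:: Some v].
Definition role_dev (others : seq R) (v : R) (f : seq R) : seq (option R) :=
  nseq (size others) None ++ Some v :: nseq (size f) (Some 0).

Definition weak_UIC (T : tfm) : Prop :=
  forall (others : seq R) (v beta : R) (f : seq R),
    nonneg_bids others -> 0 <= v -> 0 <= beta -> nonneg_bids f ->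
    exp_user_util T (others ++ beta :: f) (role_dev others v f)
      <= exp_user_util T (rcons others v) (role_honest others v).

Definition weak_MIC (B : capacity) (T : tfm) : Prop :=
  forall (b f : seq R) (m : seq bool),
    nonneg_bids b -> nonneg_bids f ->
    size m = size (b ++ f) -> fits B (count id m) ->
    rev T (mask m (b ++ f))
      + user_util T (b ++ f) (nseq (size b) None ++ nseq (size f) (Some 0)) m
      <= muo T b.

Definition weak_SCP1 (B : capacity) (T : tfm) : Prop :=
  forall (others : seq R) (v beta : R) (f : seq R) (m : seq bool),
    nonneg_bids others -> 0 <= v -> 0 <= beta -> nonneg_bids f ->
    size m = size (others ++ beta :: f) -> fits B (count id m) ->
    rev T (mask m (others ++ beta :: f))
      + user_util T (others ++ beta :: f) (role_dev others v f) m
    <= \sum_(m0 : (size (rcons others v)).-tuple bool)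
         incl T (rcons others v) m0 *
         (rev T (mask m0 (rcons others v))
          + user_util T (rcons others v) (role_honest others v) m0).

Definition nontrivial_revenue (T : tfm) : Prop :=
  exists b, nonneg_bids b /\ muo T b <> 0.

Definition trivial_tfm (T : tfm) : Prop :=
  forall b, nonneg_bids b -> (forall i, xo T b i = 0) /\ muo T b = 0.

End TFM.

From Pilot Require Import Defs.
From mathcomp Require Import all_boot all_order all_algebra.
From mathcomp Require Import fingroup perm reals.
From mathcomp Require Import lra.
Set Implicit Arguments. Unset Strict Implicit. Unset Printing Implicit Defensive.
Import Order.TTheory GRing.Theory Num.Theory.
Local Open Scope ring_scope.

(* Induction on the number of bids shows that the miner's revenue vanishes on
   every bid vector fitting in a block.  Suppose it vanishes on at most n bids
   and let r > 0 be the revenue on s ++ [w].  Weak MIC forces the honest rule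
   to include all n+1 bids surely, and, applied with a fake last bid, bounds
   r by the payment p <= w of the last bid.  Weak 1-SCP forces a positive last
   bid beta to be included surely: otherwise the miner and that user gain by
   bidding 0 and including only that bid, which earns the full value beta.
   Hence the last user, underbidding beta = r/2 instead of w, is still
   confirmed and gains at least w - r/2 > w - p, contradicting weak UIC.
   In a block of size k+1 >= 1, the same SCP argument on k+2 equal bids makes
   the last one, hence by symmetry every one, be included surely, which the
   block cannot hold; a block of size 0 confirms nothing. *)

(* [Defs.rev] is shadowed by [seq.rev]. *)
Local Notation revenue := Defs.rev.

Lemma nth_mask_sub_idx (T : Type) (x0 : T) (m : seq bool) (s : seq T) i :
  size m = size s -> nth false m i ->
  nth x0 (mask m s) (sub_idx m i) = nth x0 s i.
Proof.
rewrite /sub_idx; elim: m s i => [|b m IH] [|x s] [|i] //= [size_m] m_i.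
  by rewrite m_i.
by case: b; apply: IH.
Qed.

Lemma sub_idx_lt_size_mask (T : Type) (m : seq bool) (s : seq T) i :
  size m = size s -> nth false m i -> (sub_idx m i < size (mask m s))%N.
Proof.
move=> size_m; rewrite size_mask // /sub_idx.
by elim: m i {size_m} => [|b m IH] [|i] //= => [->|/IH]; case: b.
Qed.

Lemma sub_idx_nseq_true k i : (i <= k)%N -> sub_idx (nseq k true) i = i.
Proof. by rewrite /sub_idx; elim: k i => [|k IH] [|i] //= /IH ->. Qed.

Lemma count_lt_size_tuple k (m : k.-tuple bool) :
  m != nseq_tuple k true -> (count id m < k)%N.
Proof.
apply: contraNT; rewrite -leqNgt => full_count.
have all_m : all id m by rewrite all_count eqn_leq count_size size_tuple.
apply/eqP/val_inj => /=; rewrite -{2}(size_tuple m); apply/all_pred1P.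
by apply: sub_all all_m; case.
Qed.

Lemma fits_le B m n : fits B n -> (m <= n)%N -> fits B m.
Proof. by case: B => //= b fit_n m_le_n; apply: leq_trans m_le_n fit_n. Qed.

Lemma nth_perm_seq (T : Type) (x0 : T) n (s : {perm 'I_n}) l (j : 'I_n) :
  nth x0 (perm_seq x0 s l) j = nth x0 l (s j).
Proof. by rewrite /perm_seq (nth_map j) ?size_enum_ord // nth_ord_enum. Qed.

Lemma size_perm_seq (T : Type) (x0 : T) n (s : {perm 'I_n}) (l : seq T) :
  size (perm_seq x0 s l) = n.
Proof. by rewrite /perm_seq size_map size_enum_ord. Qed.

Lemma perm_seq_nseq (T : Type) (x0 x : T) n k (s : {perm 'I_n}) :
  (n <= k)%N -> perm_seq x0 s (nseq k x) = nseq n x.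
Proof.
move=> n_le_k; apply: (@eq_from_nth _ x0).
  by rewrite size_perm_seq size_nseq.
move=> j; rewrite size_perm_seq => j_lt_n.
rewrite -[j]/(val (Ordinal j_lt_n)) nth_perm_seq !nth_nseq j_lt_n.
by rewrite (leq_trans (ltn_ord _) n_le_k).
Qed.

Lemma sum_point_mass (R : realFieldType) (I : finType) (F G : I -> R) i0 :
  \sum_i F i = 1 -> (forall i, 0 <= F i) -> 1 <= F i0 ->
  \sum_i F i * G i = G i0.
Proof.
move=> F1 F0 Fi0; rewrite (bigD1 i0) //= in F1; rewrite (bigD1 i0) //=.
have Frest : \sum_(i | i != i0) F i = 0.
  by apply/eqP; rewrite eq_le sumr_ge0 // andbT; lra.
rewrite big1 ?addr0 => [|i i_ne]; last first.
  by rewrite (psumr_eq0P (fun j _ => F0 j) Frest) ?mul0r.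
have -> : F i0 = 1 by lra.
by rewrite mul1r.
Qed.

Lemma mean_ge1_eq1 (R : realFieldType) (I : finType) (F G : I -> R) i :
  \sum_i F i = 1 -> (forall i, 0 <= F i) -> (forall i, G i <= 1) ->
  1 <= \sum_i F i * G i -> F i != 0 -> G i = 1.
Proof.
move=> F1 F0 G1 EG Fi.
have gap0 j : 0 <= F j * (1 - G j) by rewrite mulr_ge0 // subr_ge0.
have : \sum_j F j * (1 - G j) = 0.
  apply/eqP; rewrite eq_le sumr_ge0 // andbT.
  under eq_bigr do rewrite mulrBr mulr1.
  by rewrite sumrB F1 subr_le0.
move/(psumr_eq0P (fun j _ => gap0 j)) => /(_ i isT) /eqP.
by rewrite mulf_eq0 (negbTE Fi) subr_eq0 => /eqP.
Qed.

Section Mechanism.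
Variables (R : realType) (B : capacity) (T : tfm R).

Lemma nonneg_bids_rcat (s : seq R) x :
  nonneg_bids s -> 0 <= x -> nonneg_bids (s ++ [:: x]).
Proof. by move=> s0 x0; rewrite /nonneg_bids all_cat /= x0 !andbT. Qed.

Lemma user_util_last (b : seq R) n (m : seq bool) v :
  size b = n.+1 ->
  user_util T b (nseq n None ++ [:: Some v]) m =
  if nth false m n then v - pay T (mask m b) (sub_idx m n)
  else if v < nth 0 b n then - (nth 0 b n - v) else 0.
Proof.
move=> size_b; rewrite /user_util size_b big_ord_recr /= big1 ?add0r => [|i _].
  by rewrite nth_cat size_nseq ltnn subnn.
by rewrite nth_cat size_nseq ltn_ord nth_nseq ltn_ord.
Qed.

Lemma user_util_nobody (b : seq R) (m : seq bool) :
  user_util T b (nseq (size b) None) m = 0.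
Proof. by rewrite /user_util big1 // => i _; rewrite nth_nseq ltn_ord. Qed.

Lemma muo_eq0_small n (b : seq R) :
  (forall l, nonneg_bids l -> (size l <= n)%N -> revenue T l = 0) ->
  nonneg_bids b -> (size b <= n)%N -> muo T b = 0.
Proof.
move=> rev0 b0 size_b; rewrite /muo big1 // => m _.
rewrite rev0 ?mulr0 //; first exact: all_mask.
rewrite size_mask ?size_tuple //.
by apply: leq_trans size_b; rewrite -{2}(size_tuple m) count_size.
Qed.

Hypothesis HT : is_tfm B T.

Lemma incl_ge0 b m : nonneg_bids b -> 0 <= incl T b m.
Proof. by move=> b0; case: HT => /(_ b b0) []. Qed.

Lemma sum_incl b :
  nonneg_bids b -> \sum_(m : (size b).-tuple bool) incl T b m = 1.
Proof. by move=> b0; case: HT => /(_ b b0) [_ [_ []]]. Qed.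

Lemma incl_overfull b m :
  nonneg_bids b -> ~~ fits B (count id m) -> incl T b m = 0.
Proof.
by move=> b0; case: HT => /(_ b b0) [_ [_ [overfull _]]] _; exact: overfull.
Qed.

Lemma incl_perm b (s : {perm 'I_(size b)}) m :
  nonneg_bids b -> size m = size b ->
  incl T (perm_seq 0 s b) (perm_seq false s m) = incl T b m.
Proof. by case: HT => _ [_ [sym _]]; apply: sym. Qed.

Lemma pay_bounds s j :
  nonneg_bids s -> (j < size s)%N -> 0 <= pay T s j <= nth 0 s j.
Proof. by move=> s0; case: HT => _ [/(_ s s0) [pay_le _] _]; apply: pay_le. Qed.

Lemma revenue_ge0 s : nonneg_bids s -> 0 <= revenue T s.
Proof. by move=> s0; case: HT => _ [/(_ s s0) [_ /andP[r0 _]] _]. Qed.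

Lemma revenue_nil : revenue T [::] = 0.
Proof.
case: HT => _ [/(_ [::] isT) [_] /andP[r0] + _].
by rewrite big_ord0 => r0'; apply/eqP; rewrite eq_le r0 r0'.
Qed.

Lemma pay_included b (m : seq bool) i :
  nonneg_bids b -> size m = size b -> nth false m i ->
  0 <= pay T (mask m b) (sub_idx m i) <= nth 0 b i.
Proof.
move=> b0 size_m m_i; rewrite -(nth_mask_sub_idx 0 size_m m_i).
by apply: pay_bounds; [exact: all_mask | exact: sub_idx_lt_size_mask].
Qed.

Hypothesis HS : weak_SCP1 B T.

Lemma xo_last_ge1 s beta :
  fits B 1 -> nonneg_bids s -> 0 < beta ->
  (forall m : (size (s ++ [:: beta])).-tuple bool,
     incl T (s ++ [:: beta]) m != 0 ->
     revenue T (mask m (s ++ [:: beta])) <=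
       if nth false m (size s)
       then pay T (mask m (s ++ [:: beta])) (sub_idx m (size s)) else 0) ->
  1 <= xo T (s ++ [:: beta]) (size s).
Proof.
move=> fit1 s0 beta_gt0 rev_le_pay.
have t0 := nonneg_bids_rcat s0 (ltW beta_gt0).
pose onehot := nseq (size s) false ++ [:: true].
have onehot_size : size onehot = size (s ++ [:: 0]).
  by rewrite !size_cat size_nseq.
have onehot_count : count id onehot = 1%N by rewrite /onehot; elim: (size s).
have onehot_mask : mask onehot (s ++ [:: 0]) = [:: 0].
  by rewrite mask_cat ?size_nseq // mask_false.
have onehot_last : nth false onehot (size s) by rewrite /onehot; elim: (size s).
have onehot_idx : sub_idx onehot (size s) = 0%N.
  by rewrite /sub_idx /onehot; elim: (size s).
have := @HS s beta 0 [::] onehot s0 (ltW beta_gt0) (lexx 0) isT onehot_size.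
rewrite onehot_count => /(_ fit1).
rewrite /role_dev /role_honest -cats1 /= onehot_mask.
rewrite user_util_last; last by rewrite size_cat addn1.
rewrite onehot_last onehot_idx onehot_mask.
have zero0 : nonneg_bids [:: (0 : R)] by rewrite /nonneg_bids /= lexx.
have /andP[_ pay0] := pay_bounds zero0 (ltn0Sn 0).
have rev0 := revenue_ge0 zero0.
move=> coalition.
have : beta <= beta * xo T (s ++ [:: beta]) (size s).
  apply: le_trans (le_trans coalition _); first by move: pay0 => /=; lra.
  rewrite /xo mulr_sumr; apply: ler_sum => m _; rewrite mulrCA.
  have [->|incl_m] := eqVneq (incl T (s ++ [:: beta]) m) 0.
    by rewrite !mul0r.
  apply: ler_wpM2l; first exact: incl_ge0.
  have := rev_le_pay m incl_m.
  rewrite user_util_last; last by rewrite size_cat addn1.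
  case: (nth false m (size s)) => /=; first by rewrite mulr1; lra.
  by rewrite nth_cat ltnn subnn ltxx mulr0 addr0.
by rewrite -[X in X <= _]mulr1 ler_pM2l.
Qed.

Hypotheses (HU : weak_UIC T) (HM : weak_MIC B T).

Section RevenueStep.
Variable n : nat.
Hypothesis fit_n1 : fits B n.+1.
Hypothesis revenue0 :
  forall l, nonneg_bids l -> (size l <= n)%N -> revenue T l = 0.
Variable s : seq R.
Hypotheses (s0 : nonneg_bids s) (s_size : size s = n).

Let size_rcat x : size (s ++ [:: x]) = n.+1.
Proof. by rewrite size_cat s_size addn1. Qed.

Lemma revenue_le_last_pay x :
  0 <= x -> revenue T (s ++ [:: x]) <= pay T (s ++ [:: x]) n.
Proof.
move=> x0; have x0' : nonneg_bids [:: x] by rewrite /nonneg_bids /= x0.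
have := @HM s [:: x] (nseq n.+1 true) s0 x0'.
rewrite size_nseq size_rcat count_nseq mul1n => /(_ erefl fit_n1).
rewrite (muo_eq0_small revenue0 s0) ?s_size // mask_true ?size_rcat //.
rewrite [nseq (size _) _]/= user_util_last ?size_rcat // nth_nseq ltnSn.
by rewrite sub_idx_nseq_true // mask_true ?size_rcat //; lra.
Qed.

Lemma muo_rcat w :
  0 <= w -> muo T (s ++ [:: w]) =
  incl T (s ++ [:: w]) (nseq_tuple (size (s ++ [:: w])) true) *
  revenue T (s ++ [:: w]).
Proof.
move=> w0; rewrite /muo (bigD1 (nseq_tuple _ true)) //= mask_true //.
rewrite big1 ?addr0 // => m not_full; rewrite revenue0 ?mulr0 //.
  exact: all_mask (nonneg_bids_rcat s0 w0).
by rewrite size_mask ?size_tuple // -ltnS -(size_rcat w) count_lt_size_tuple.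
Qed.

Lemma incl_full_ge1 w :
  0 <= w -> 0 < revenue T (s ++ [:: w]) ->
  1 <= incl T (s ++ [:: w]) (nseq_tuple (size (s ++ [:: w])) true).
Proof.
move=> w0 rev_gt0.
have := @HM (s ++ [:: w]) [::] (nseq (size (s ++ [:: w])) true)
  (nonneg_bids_rcat s0 w0) isT.
rewrite cats0 size_nseq count_nseq mul1n mask_true // cats0.
rewrite user_util_nobody addr0.
move=> /(_ erefl (fits_le fit_n1 (eq_leq (size_rcat w)))).
by rewrite muo_rcat // ler_pMl.
Qed.

Lemma exp_user_util_honest w :
  0 <= w -> 0 < revenue T (s ++ [:: w]) ->
  exp_user_util T (s ++ [:: w]) (role_honest s w) = w - pay T (s ++ [:: w]) n.
Proof.
move=> w0 rev_gt0; have sw0 := nonneg_bids_rcat s0 w0.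
rewrite /exp_user_util.
rewrite (sum_point_mass _ (sum_incl sw0) (fun m => incl_ge0 m sw0)
  (incl_full_ge1 w0 rev_gt0)).
rewrite /role_honest s_size user_util_last ?size_rcat //.
rewrite -[tval _]/(nseq n.+1 true) nth_nseq ltnSn.
by rewrite sub_idx_nseq_true // mask_true ?size_rcat.
Qed.

Lemma exp_user_util_underbid w beta :
  0 <= beta <= w ->
  (w - beta) * xo T (s ++ [:: beta]) n <=
  exp_user_util T (s ++ [:: beta]) (role_dev s w [::]).
Proof.
move=> /andP[beta0 beta_w]; have sb0 := nonneg_bids_rcat s0 beta0.
rewrite /xo /exp_user_util mulr_sumr; apply: ler_sum => m _; rewrite mulrCA.
apply: ler_wpM2l; first exact: incl_ge0.
rewrite /role_dev s_size user_util_last ?size_rcat //.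
case included: (nth false m n).
  have := pay_included sb0 (size_tuple m) included.
  by rewrite nth_cat s_size ltnn subnn /= mulr1 => /andP[_ pay_le]; lra.
by rewrite nth_cat s_size ltnn subnn ltNge beta_w mulr0.
Qed.

Lemma revenue_rcat_eq0 w : 0 <= w -> revenue T (s ++ [:: w]) = 0.
Proof.
move=> w0; have sw0 := nonneg_bids_rcat s0 w0.
apply/eqP; rewrite eq_le revenue_ge0 // andbT leNgt; apply/negP => rev_gt0.
set r := revenue T (s ++ [:: w]) in rev_gt0 *.
pose beta := r / 2; have beta_half : beta = r / 2 by [].
have beta_gt0 : 0 < beta by rewrite divr_gt0.
have r_le_pay : r <= pay T (s ++ [:: w]) n := revenue_le_last_pay w0.
have pay_le_w : pay T (s ++ [:: w]) n <= w.
  have : (n < size (s ++ [:: w]))%N by rewrite size_rcat.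
  by move/(pay_bounds sw0)/andP => [_]; rewrite nth_cat s_size ltnn subnn.
have beta_le_w : beta <= w by lra.
have sb0 := nonneg_bids_rcat s0 (ltW beta_gt0).
have xo1 : 1 <= xo T (s ++ [:: beta]) n.
  rewrite -s_size; apply: xo_last_ge1 => //; first exact: fits_le fit_n1 _.
  move=> m _; rewrite s_size.
  have [->|not_full] := eqVneq m (nseq_tuple _ true).
    rewrite -[tval _]/(nseq (size (s ++ [:: beta])) true) size_rcat.
    rewrite nth_nseq ltnSn sub_idx_nseq_true // mask_true ?size_rcat //.
    exact: revenue_le_last_pay (ltW beta_gt0).
  rewrite revenue0; last 2 first.
  - exact: all_mask.
  - rewrite size_mask ?size_tuple // -ltnS -(size_rcat beta).
    exact: count_lt_size_tuple.
  by case: ifP => // /(pay_included sb0 (size_tuple m)) /andP[].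
have := @HU s w beta [::] s0 w0 (ltW beta_gt0) isT.
rewrite -cats1 exp_user_util_honest // -/r.
have := exp_user_util_underbid (w := w) (beta := beta).
rewrite beta_le_w ltW // => /(_ isT) underbid.
have : w - beta <= (w - beta) * xo T (s ++ [:: beta]) n.
  by rewrite ler_peMr // subr_ge0.
lra.
Qed.
End RevenueStep.

Lemma revenue_eq0 n l :
  fits B n -> nonneg_bids l -> (size l <= n)%N -> revenue T l = 0.
Proof.
elim: n l => [|n IHn] l fit_n l0 l_size.
  by move: l_size; rewrite leqn0 => /nilP ->; exact: revenue_nil.
have {}IHn := IHn ^~ (fits_le fit_n (leqnSn n)).
rewrite leq_eqVlt ltnS in l_size.
case/orP: l_size => [/eqP l_size|]; last exact: IHn.
case/lastP: l l0 l_size => [|s w]; first by rewrite revenue_nil.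
rewrite -cats1 /nonneg_bids all_cat /= andbT size_cat addn1.
move=> /andP[s0 w0] [s_size].
exact: (revenue_rcat_eq0 fit_n IHn s0 s_size w0).
Qed.

Lemma muo_eq0 b : nonneg_bids b -> muo T b = 0.
Proof.
move=> b0; rewrite /muo big1 // => m _.
case fit_m: (fits B (count id m)); last by rewrite incl_overfull ?fit_m ?mul0r.
rewrite (revenue_eq0 fit_m) ?mulr0 //; first exact: all_mask.
by rewrite size_mask ?size_tuple.
Qed.

Lemma xo_eq0_empty_block b i : B = Some 0%N -> nonneg_bids b -> xo T b i = 0.
Proof.
move=> B0 b0; rewrite /xo big1 // => m _.
case fit_m: (fits B (count id m)); last by rewrite incl_overfull ?fit_m ?mul0r.
move: fit_m; rewrite B0 /= leqn0 eqn0Ngt -has_count => /hasPn no_true.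
case included: (nth false m i); last by rewrite mulr0.
have i_lt : (i < size m)%N.
  by rewrite ltnNge; apply: contraTN included => /(nth_default false) ->.
by move: (no_true _ (mem_nth false i_lt)); rewrite included.
Qed.

Lemma no_tfm_nonempty_block k : B = Some k.+1 -> False.
Proof.
move=> Bk; set t := nseq k.+2 (1 : R).
have t0 : nonneg_bids t by rewrite /nonneg_bids all_nseq ler01 orbT.
have t_size : size t = k.+2 by rewrite size_nseq.
have t_split : t = nseq k.+1 1 ++ [:: 1] by rewrite /t -addn1 nseqD.
have fits_incl m : incl T t m != 0 -> fits B (count id m).
  by apply: contraNT => /(incl_overfull t0) ->.
have xo1 : 1 <= xo T t k.+1.
  have := @xo_last_ge1 (nseq k.+1 1) 1; rewrite size_nseq -t_split; apply.
  - by rewrite Bk.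
  - by rewrite /nonneg_bids all_nseq ler01 orbT.
  - exact: ltr01.
  - move=> m /fits_incl fit_m.
    rewrite (revenue_eq0 fit_m) ?size_mask ?size_tuple //; last exact: all_mask.
    by case: ifP => // /(pay_included t0 (size_tuple m)) /andP[].
have last_in (m : (size t).-tuple bool) : incl T t m != 0 -> nth false m k.+1.
  move=> incl_m.
  have G_le1 (m' : (size t).-tuple bool) : (nth false m' k.+1)%:R <= 1 :> R.
    by case: nth.
  have := mean_ge1_eq1 (sum_incl t0) (fun m' => incl_ge0 m' t0) G_le1 xo1
    incl_m.
  by case: (nth false m k.+1) => // /eqP; rewrite eq_sym oner_eq0.
have all_in (m : (size t).-tuple bool) : incl T t m != 0 -> all id m.
  move=> incl_m; apply/(all_nthP false) => i; rewrite size_tuple => i_lt.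
  have k1_lt : (k.+1 < size t)%N by rewrite t_size.
  pose sg := tperm (Ordinal i_lt) (Ordinal k1_lt).
  have m'_size : size (perm_seq false sg m) == size t by rewrite size_perm_seq.
  have := last_in (Tuple m'_size); rewrite /= -[k.+1]/(val (Ordinal k1_lt)).
  rewrite nth_perm_seq tpermR; apply.
  have t_perm : perm_seq 0 sg t = t by rewrite perm_seq_nseq ?t_size.
  by have := incl_perm sg t0 (size_tuple m); rewrite t_perm => ->.
have incl0 (m : (size t).-tuple bool) : incl T t m = 0.
  apply/eqP; apply: contraT => incl_m.
  have := fits_incl m incl_m; rewrite Bk /=.
  move: (all_in m incl_m); rewrite all_count size_tuple => /eqP ->.
  by rewrite t_size ltnn.
by move: (sum_incl t0); rewrite big1 // => /eqP; rewrite eq_sym oner_eq0.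
Qed.
End Mechanism.

Theorem mainTheorem5 (R : realType) (B : capacity) (T : tfm R) :
  is_tfm B T ->
  ~ (nontrivial_revenue T /\ weak_UIC T /\ weak_MIC B T /\ weak_SCP1 B T) /\
  (forall k : nat, B = Some k ->
     weak_UIC T -> weak_MIC B T -> weak_SCP1 B T -> trivial_tfm T).
Proof.
move=> HT; split.
  case=> [[b [b0 muo_b]] [HU [HM HS]]].
  by apply: muo_b; exact: (muo_eq0 HT HS HU HM b0).
move=> [|k] Bk HU HM HS; last by case: (no_tfm_nonempty_block HT HS HU HM Bk).
move=> b b0; split; first by move=> i; exact: (xo_eq0_empty_block HT i Bk b0).
exact: (muo_eq0 HT HS HU HM b0).
Qed.
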